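(* Let $n\ge1$, $\preceq$ an admissible order on $L([0,1])$, $F\colon L([0,1])^2\to L([0,1])$, $G\colon L([0,1])^n\to L([0,1])$. The IV Sugeno-like $FG$-functional satisfies $\mathbf S_m^{F,G}(\mathbf1,\dots,\mathbf1)=\mathbf1$ for every IV fuzzy measure $m$ whenever: (i) $F(\mathbf1,\mathbf1)=\mathbf1$, $G=f\circ\mathrm{Proj}_1$ for some $f\colon L([0,1])\to L([0,1])$ with $f(\mathbf1)=\mathbf1$; or (ii) $F(\mathbf1,\mathbf1)=\mathbf1$, $F$ is non-decreasing in the second variable, $G=f\circ\vee$ for some $f$ with $f(\mathbf1)=\mathbf1$.
   Context: $N=\{1,\dots,n\}$. $L([0,1])=\{[a,b]:0\le a\le b\le1\}$, $\mathbf0=[0,0]$, $\mathbf1=[1,1]$. An admissible order $\preceq$ is a total order on $L([0,1])$ with $[a,b]\preceq[c,d]$ whenever $a\le c$, $b\le d$. $\vee$ denotes maximum w.r.t. $\preceq$; monotonicity is w.r.t. $\preceq$; $\mathrm{Proj}_1(X_1,\dots,X_n)=X_1$. An IV fuzzy measure w.r.t. $\preceq$ is $m\colon2^N\to L([0,1])$, $m(\emptyset)=\mathbf0$, $m(N)=\mathbf1$, $m(A)\preceq m(B)$ for $A\subseteq B$. For a permutation $\sigma$, $E_{\sigma(i)}=\{\sigma(i),\dots,\sigma(n)\}$. $\mathbf S_m^{F,G}(X_1,\dots,X_n)=G\big(F(X_{\sigma(1)},m(E_{\sigma(1)})),\dots,F(X_{\sigma(n)},m(E_{\sigma(n)}))\big)$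 with $\sigma$ any permutation such that $X_{\sigma(1)}\preceq\dots\preceq X_{\sigma(n)}$; it is defined when this value does not depend on the choice of $\sigma$ for all inputs. *)

From HB Require Import structures.
From mathcomp Require Import all_boot all_order all_algebra all_fingroup.
From mathcomp Require Import reals.
Set Implicit Arguments. Unset Strict Implicit. Unset Printing Implicit Defensive.
Import Order.TTheory GRing.Theory Num.Theory.
Local Open Scope ring_scope.

Record itv (R : realType) := Itv {
  lo : R; hi : R;
  lo_ge0 : 0 <= lo; lo_le_hi : lo <= hi; hi_le1 : hi <= 1 }.

Lemma ler01 (R : realType) : (0 : R) <= 1. Proof. exact: ler01. Qed.
Lemma lerr0 (R : realType) : (0 : R) <= 0. Proof. exact: lexx. Qed.
Lemma lerr1 (R : realType) : (1 : R) <= 1. Proof. exact: lexx. Qed.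

Definition itv0 (R : realType) : itv R := Itv (lerr0 R) (lerr0 R) (ler01 R).
Definition itv1 (R : realType) : itv R := Itv (ler01 R) (lerr1 R) (lerr1 R).

Definition admissible (R : realType) (le : rel (itv R)) : Prop :=
  [/\ reflexive le, antisymmetric le, transitive le, total le &
      forall x y : itv R, lo x <= lo y -> hi x <= hi y -> le x y].

Definition max2 (R : realType) (le : rel (itv R)) (x y : itv R) : itv R :=
  if le x y then y else x.
Definition vee (R : realType) (le : rel (itv R)) (n : nat) (X : 'I_n -> itv R)
  : itv R := \big[max2 le/itv0 R]_(i < n) X i.

Definition proj1 (R : realType) (n : nat) (hn : (0 < n)%N) (X : 'I_n -> itv R)
  : itv R := X (Ordinal hn).

Definition iv_fuzzy_measure (R : realType) (le : rel (itv R)) (n : nat)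
  (m : {set 'I_n} -> itv R) : Prop :=
  [/\ m set0 = itv0 R, m setT = itv1 R &
      forall A B : {set 'I_n}, A \subset B -> le (m A) (m B)].

Definition nondecr2 (R : realType) (le : rel (itv R))
  (F : itv R -> itv R -> itv R) : Prop :=
  forall x y z, le y z -> le (F x y) (F x z).

Definition Eset (n : nat) (s : 'S_n) (i : 'I_n) : {set 'I_n} :=
  [set s j | j : 'I_n & (i <= j)%N].

Definition sorts (R : realType) (le : rel (itv R)) (n : nat)
  (X : 'I_n -> itv R) (s : 'S_n) : Prop :=
  forall i j : 'I_n, (i <= j)%N -> le (X (s i)) (X (s j)).

Definition SFG (R : realType) (n : nat) (F : itv R -> itv R -> itv R)
  (G : ('I_n -> itv R) -> itv R) (m : {set 'I_n} -> itv R)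
  (X : 'I_n -> itv R) (s : 'S_n) : itv R :=
  G (fun i => F (X (s i)) (m (Eset s i))).

From mathcomp Require Import all_boot all_order all_algebra all_fingroup.
From mathcomp Require Import reals.
Import Order.TTheory GRing.Theory Num.Theory.
Set Implicit Arguments.
Unset Strict Implicit.
Unset Printing Implicit Defensive.

(* The first term of the functional is [F (X (s 0)) (m N)], since E_{s(0)} is
   all of N; for the constant input 1 it equals [F 1 1 = 1]. In case (i) G
   reads off exactly this term. In case (ii) the maximum dominates this term,
   and 1 is the top element of every admissible order, so the maximum is 1. *)

Lemma Eset_first (n : nat) (hn : (0 < n)%N) (s : 'S_n) :
  Eset s (Ordinal hn) = setT.
Proof.
apply/setP => x; rewrite in_setT; apply/imsetP; exists (s^-1%g x).
  by rewrite inE.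
by rewrite permKV.
Qed.

Lemma admissible_le1 (R : realType) (le : rel (itv R)) (x : itv R) :
  admissible le -> le x (itv1 R).
Proof.
case=> _ _ _ _ le_prod; case: x => l h l0 lh h1.
by apply: le_prod => //=; apply: le_trans lh h1.
Qed.

Section MaxOfTotal.

Variables (R : realType) (le : rel (itv R)).
Hypotheses (le_total : total le) (le_trans : transitive le).

Lemma max2_gel (x y : itv R) : le x (max2 le x y).
Proof. by rewrite /max2; case: ifP => // _; have /orP[] := le_total x x. Qed.

Lemma max2_ger (x y : itv R) : le y (max2 le x y).
Proof.
rewrite /max2; case: ifP => [_|le_xy_false]; first by have /orP[] := le_total y y.
by have /orP[] := le_total x y; rewrite ?le_xy_false.
Qed.

Lemma vee_ge (n : nat) (X : 'I_n -> itv R) (i : 'I_n) : le (X i) (vee le X).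
Proof.
rewrite /vee; have : i \in index_enum 'I_n by rewrite mem_index_enum.
elim: (index_enum _) => //= a r IH; rewrite inE big_cons => /orP[/eqP ->|/IH].
  exact: max2_gel.
by move/le_trans; apply; apply: max2_ger.
Qed.

End MaxOfTotal.

Lemma vee_eq1 (R : realType) (le : rel (itv R)) (n : nat)
    (X : 'I_n -> itv R) (i : 'I_n) :
  admissible le -> X i = itv1 R -> vee le X = itv1 R.
Proof.
move=> adm Xi1; have [_ le_anti le_trans le_total _] := adm.
apply: le_anti; rewrite admissible_le1 //=.
by rewrite -Xi1; apply: vee_ge.
Qed.

Theorem proposition9 (R : realType) (n : nat) (hn : (0 < n)%N)
  (le : rel (itv R)) (F : itv R -> itv R -> itv R)
  (G : ('I_n -> itv R) -> itv R) :
  admissible le ->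
  ((F (itv1 R) (itv1 R) = itv1 R /\
     exists f : itv R -> itv R, f (itv1 R) = itv1 R /\
       G = (fun X => f (proj1 hn X)))
   \/
   (F (itv1 R) (itv1 R) = itv1 R /\ nondecr2 le F /\
     exists f : itv R -> itv R, f (itv1 R) = itv1 R /\
       G = (fun X => f (vee le X)))) ->
  forall m : {set 'I_n} -> itv R, iv_fuzzy_measure le m ->
  forall s : 'S_n, sorts le (fun _ => itv1 R) s ->
    SFG F G m (fun _ => itv1 R) s = itv1 R.
Proof.
move=> adm hFG m [_ mN _] s _.
have first_term1 : F (itv1 R) (m (Eset s (Ordinal hn))) = itv1 R.
  by rewrite Eset_first mN; case: hFG => [[]|[]].
case: hFG => [[_ [f [f1 ->]]]|[_ [_ [f [f1 ->]]]]]; rewrite /SFG.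
  by rewrite /proj1 first_term1.
by rewrite (vee_eq1 adm first_term1).
Qed.
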